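(* Let $T\ge1$ and $0<\eta\le\frac{1}{5\sqrt T}$, and suppose $d:=\max\{25\eta^2T^2,1\}$ is a positive integer. Let $f(w)=\max\{0,\max_{i\in[d]}(\frac{1}{\sqrt d}-w[i]-\frac{\eta i}{4d})\}$ on $\mathbb R^d$ and run unprojected GD $w_1=0$, $w_{t+1}=w_t-\eta\nabla f(w_t)$ for $1\le t<T$. Then (i) $w_t\in\mathbb B^d$ (the closed unit ball) for all $t\in[T]$; and (ii) for every $m\in\{1,\dots,T\}$, the suffix average $w_{T,m}=\frac1m\sum_{i=1}^m w_{T-i+1}$ satisfies $$f(w_{T,m})-\inf_{w\in\mathbb R^d}f(w)\ \ge\ \min\Big\{\frac14,\ \frac{1}{20\eta T}\Big\}.$$
   Context: $w[i]$ denotes the $i$-th coordinate of $w$. *)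

From HB Require Import structures.
From mathcomp Require Import all_boot all_order all_algebra.
From mathcomp Require Import boolp classical_sets reals.
Set Implicit Arguments. Unset Strict Implicit. Unset Printing Implicit Defensive.
Import Order.TTheory GRing.Theory Num.Theory.
Local Open Scope ring_scope.
Local Open Scope classical_set_scope.

(* Vectors in R^d are functions 'I_d -> R; coordinate i : 'I_d is the
   paper's coordinate i+1 (paper indexes [d] = {1,...,d}). *)
Definition vec (R : realType) (d : nat) := 'I_d -> R.

Definition dotv (R : realType) (d : nat) (u v : vec R d) : R :=
  \sum_(i < d) u i * v i.

Definition norm2 (R : realType) (d : nat) (u : vec R d) : R :=
  Num.sqrt (dotv u u).

Definition fhard (R : realType) (d : nat) (eta : R) (w : vec R d) : R :=
  Num.max 0 (\big[Num.max/0]_(j < d)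
     ((Num.sqrt d%:R)^-1 - w j - eta * (val j).+1%:R / (4 * d%:R))).

Definition is_subgrad (R : realType) (d : nat) (f : vec R d -> R)
  (w g : vec R d) : Prop :=
  forall v : vec R d, f w + dotv g (fun i => v i - w i) <= f v.

Definition suffix_avg (R : realType) (d : nat) (w : nat -> vec R d)
  (T m : nat) : vec R d :=
  fun j => m%:R^-1 * \sum_(1 <= i < m.+1) w (T - i + 1)%N j.

(* Every piece of f has gradient -e_i and the offsets eta i / (4 d) are tiny, so from w_1 = 0
   subgradient descent raises the coordinates one at a time in cyclic order: after n steps
   coordinate j equals eta (n div d + [j < n mod d]).  At that point the piece of index n mod d
   leads every other piece by at least eta / (4 d), which forces the subgradient to be
   -e_(n mod d).  As n < T and d >= (5 eta T)^2, all coordinates stay in [0, 2 / (5 sqrt d)], so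
   the iterates have norm at most 2/5 and any average of them has first piece at least
   1 / (2 sqrt d) = min (1/2, 1 / (10 eta T)), while inf f = 0. *)

From mathcomp Require Import all_boot all_order all_algebra.
From mathcomp Require Import boolp classical_sets reals.
From mathcomp Require Import ring lra.
Set Implicit Arguments. Unset Strict Implicit. Unset Printing Implicit Defensive.
Import Order.TTheory GRing.Theory Num.Theory.
Local Open Scope ring_scope.
Local Open Scope classical_set_scope.

Section HardFunction.
Variables (R : realType) (d : nat) (eta : R).
Local Notation s := (Num.sqrt (d%:R : R)).
Local Notation f := (@fhard R d eta).

Definition fhard_piece (w : vec R d) (j : 'I_d) : R :=
  s^-1 - w j - eta * (val j).+1%:R / (4 * d%:R).

Lemma fhard_ge_piece (w : vec R d) (j : 'I_d) : fhard_piece w j <= f w.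
Proof.
rewrite /fhard le_max; apply/orP; right.
exact: (le_bigmax _ (fhard_piece w)).
Qed.

Lemma fhard_ge0 (w : vec R d) : 0 <= f w.
Proof. by rewrite /fhard le_max lexx. Qed.

Lemma fhard_le (w : vec R d) (M : R) :
  0 <= M -> (forall j, fhard_piece w j <= M) -> f w <= M.
Proof.
by move=> M0 hM; rewrite /fhard ge_max M0; apply: bigmax_le => // i _; exact: hM.
Qed.

Lemma fhard_eq_piece (w : vec R d) (r : 'I_d) :
  0 <= fhard_piece w r -> (forall j, fhard_piece w j <= fhard_piece w r) ->
  f w = fhard_piece w r.
Proof.
by move=> r0 hr; apply/eqP; rewrite eq_le fhard_le ?fhard_ge_piece.
Qed.

Lemma fhard_const_inv_sqrt : 0 <= eta -> f (fun _ : 'I_d => s^-1) = 0.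
Proof.
move=> eta0; apply/eqP; rewrite eq_le fhard_ge0 andbT.
apply: fhard_le => // j; rewrite /fhard_piece subrr sub0r oppr_le0.
by rewrite mulr_ge0 ?invr_ge0 ?mulr_ge0 ?ler0n.
Qed.

Lemma inf_range_fhard : 0 <= eta -> inf (range f) = 0.
Proof.
move=> eta0; apply/eqP; rewrite eq_le; apply/andP; split.
  rewrite -(fhard_const_inv_sqrt eta0); apply: ge_inf; last by exists (fun _ : 'I_d => s^-1).
  by exists 0 => _ [w _ <-]; exact: fhard_ge0.
apply: lb_le_inf; first by exists (f (fun _ : 'I_d => 0)), (fun _ : 'I_d => 0).
by move=> _ [w _ <-]; exact: fhard_ge0.
Qed.

Lemma fhard_ge_half_inv_sqrt (u : vec R d) (j : 'I_d) : 0 <= eta ->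
  eta <= (5 * s)^-1 -> u j <= 2 * (5 * s)^-1 -> (2 * s)^-1 <= f u.
Proof.
move=> eta0 eta_s uj; apply: le_trans (fhard_ge_piece u j); rewrite /fhard_piece.
have d0 : 0 < d%:R :> R by rewrite ltr0n (leq_ltn_trans (leq0n _) (ltn_ord j)).
have : eta * (val j).+1%:R / (4 * d%:R) <= eta / 4.
  rewrite ler_pdivrMr ?mulr_gt0 //.
  have -> : eta / 4 * (4 * d%:R) = eta * d%:R by field.
  by apply: ler_wpM2l => //; rewrite ler_nat ltn_ord.
have : 0 <= s^-1 by rewrite invr_ge0 sqrtr_ge0.
rewrite !invfM in eta_s uj *; lra.
Qed.

Definition shift_coord (w : vec R d) (k : 'I_d) (x : R) : vec R d :=
  fun i => w i + (if i == k then x else 0).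

Definition dominant_piece (w : vec R d) (r : 'I_d) (del : R) : Prop :=
  del <= fhard_piece w r /\
  forall j, j != r -> fhard_piece w j + del <= fhard_piece w r.

Lemma fhard_shift (w : vec R d) (r k : 'I_d) (del x : R) :
  dominant_piece w r del -> `|x| <= del ->
  f (shift_coord w k x) = fhard_piece w r - (if k == r then x else 0).
Proof.
move=> [del_le_r r_dominant] /ler_normlP [xl xr].
have pieceE j :
    fhard_piece (shift_coord w k x) j = fhard_piece w j - (if j == k then x else 0).
  by rewrite /fhard_piece /shift_coord; lra.
rewrite (eq_sym k r) -pieceE.
apply: fhard_eq_piece => [|j]; rewrite !pieceE.
  by case: (r == k); lra.
case: (eqVneq j r) => [->|jr]; first exact: lexx.
by have := r_dominant _ jr; case: (j == k); case: (r == k); lra.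
Qed.

Lemma subgrad_fhard_dominant (w g : vec R d) (r : 'I_d) (del : R) :
  0 < del -> dominant_piece w r del -> is_subgrad f w g ->
  g = fun k => if k == r then -1 else 0.
Proof.
move=> del0 hdom hsub; apply: funext => k.
have fw : f w = fhard_piece w r.
  case: hdom => del_le_r r_dominant; apply: fhard_eq_piece => [|j]; first lra.
  case: (eqVneq j r) => [->|jr]; first exact: lexx.
  by have := r_dominant _ jr; lra.
have slope x : `|x| <= del -> g k * x <= - (if k == r then x else 0).
  move=> hx; have := hsub (shift_coord w k x); rewrite (fhard_shift k hdom hx) fw.
  rewrite /dotv (bigD1 k) //= big1 => [|i ik]; last first.
    by rewrite /shift_coord (negbTE ik) addr0 subrr mulr0.
  rewrite /shift_coord eqxx addr0 [w k + x]addrC addrK => h.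
  by rewrite -(lerD2l (fhard_piece w r)).
have := slope del; have := slope (- del).
rewrite normrN gtr0_norm // => /(_ (lexx _)) h1 /(_ (lexx _)) h2.
by apply/eqP; rewrite eq_le; case: (k == r) h1 h2 => h1 h2; apply/andP; split; nra.
Qed.

End HardFunction.

Lemma norm2_le (R : realType) (d : nat) (u : vec R d) (c : R) :
  0 <= c -> (forall j, `|u j| <= c) -> norm2 u <= Num.sqrt d%:R * c.
Proof.
move=> c0 hc; rewrite /norm2 -[c in X in _ <= X]ger0_norm // -sqrtr_sqr.
rewrite -sqrtrM ?ler0n // ler_sqrt ?mulr_ge0 ?ler0n ?sqr_ge0 //.
apply: (@le_trans _ _ (\sum_(j < d) c ^+ 2)); last first.
  by rewrite sumr_const card_ord mulr_natl.
apply: ler_sum => j _.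
by apply: le_trans (ler_norm _) _; rewrite normrM expr2 ler_pM.
Qed.

Lemma suffix_avg_le (R : realType) (d : nat) (w : nat -> vec R d) (T m : nat)
    (j : 'I_d) (c : R) :
  (0 < m)%N -> (forall i, (1 <= i <= m)%N -> w (T - i + 1)%N j <= c) ->
  suffix_avg w T m j <= c.
Proof.
move=> m0 hc; rewrite /suffix_avg ler_pdivrMl ?ltr0n //.
apply: (@le_trans _ _ (\sum_(1 <= i < m.+1) c)).
  by apply: ler_sum_nat => i /andP [i1 im]; apply: hc; rewrite i1 -ltnS.
by rewrite sumr_const_nat subn1 mulr_natl.
Qed.

Lemma divn_ltn_modS (n d j : nat) : (0 < d)%N -> (j < d)%N ->
  (n %/ d + (j < n %% d) + (j == n %% d) = n.+1 %/ d + (j < n.+1 %% d))%N.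
Proof.
move=> hd hj.
have hr : (n %% d < d)%N by rewrite ltn_mod.
have em : (n.+1 %% d = (n %% d).+1 %% d)%N by rewrite -addn1 -modnDml addn1.
rewrite (divnS _ hd) /dvdn em.
have [h|h] := ltnP (n%%d).+1 d.
  rewrite (modn_small h) /= add0n -addnA; congr (_ + _)%N.
  by rewrite ltnS; case: (ltngtP j (n %% d)).
have hd' : (n %% d).+1 = d by apply/eqP; rewrite eqn_leq hr h.
rewrite hd' modnn /= ?ltn0 ?addn0 add1n -addnA -[(n %/ d).+1]addn1; congr (_ + _)%N.
have : (j <= n %% d)%N by rewrite -ltnS hd'.
by case: (ltngtP j (n %% d)).
Qed.

Section GradientDescentPath.
Variables (R : realType) (d : nat) (eta : R).
Hypothesis d_gt0 : (0 < d)%N.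
Local Notation s := (Num.sqrt (d%:R : R)).
Local Notation e := (eta / (4 * d%:R)).

Definition gd_iterate (n : nat) : vec R d := fun j => eta * (n %/ d + (j < n %% d))%:R.

Definition active_coord (n : nat) : 'I_d := Ordinal (ltn_pmod n d_gt0).

Lemma gd_iterateS (n : nat) :
  gd_iterate n.+1 = fun j => gd_iterate n j - eta * (if j == active_coord n then -1 else 0).
Proof.
apply: funext => j; rewrite /gd_iterate -(divn_ltn_modS n d_gt0 (ltn_ord j)).
have -> : (j == active_coord n) = (val j == n %% d)%N by [].
by case: (val j == n %% d)%N; rewrite /= ?addn0 ?natrD; lra.
Qed.

Lemma fhard_piece_gd_iterate (n : nat) (j : 'I_d) : fhard_piece eta (gd_iterate n) j =
  s^-1 - eta * (n %/ d)%:R - eta * (j < n %% d)%:R - e * (val j)%:R - e.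
Proof. by rewrite /fhard_piece /gd_iterate natrD -natr1; ring. Qed.

Lemma gd_iterate_dominant (n : nat) : 0 < eta -> eta <= (5 * s)^-1 ->
  eta * (n %/ d)%:R <= (5 * s)^-1 ->
  dominant_piece eta (gd_iterate n) (active_coord n) e.
Proof.
move=> eta0 eta_s hq.
have d0 : 0 < d%:R :> R by rewrite ltr0n.
have e0 : 0 < e by rewrite divr_gt0 ?mulr_gt0.
have eD : e * d%:R = eta / 4 by field; rewrite ?pnatr_eq0 -?lt0n.
have ej j : 0 <= e * j%:R by rewrite mulr_ge0 ?ler0n // ltW.
have ele k l : (k <= l)%N -> e * k%:R <= e * l%:R by move=> kl; rewrite ler_pM2l // ler_nat.
have e_le : e * (n %% d)%:R + e <= eta / 4.
  by rewrite -eD -[e in _ + e]mulr1 -mulrDr natr1 ler_pM2l // ler_nat ltn_pmod.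
have s_inv : 0 <= s^-1 by rewrite invr_ge0 sqrtr_ge0.
rewrite invfM in eta_s hq.
split=> [|j jr]; rewrite !fhard_piece_gd_iterate /= ltnn mulr0.
  by have := ej (n %% d)%N; lra.
have [jn|nj] := ltnP j (n %% d).
  by have := ej j; rewrite /=; lra.
have {}nj : (n %% d < j)%N.
  by rewrite ltn_neqAle nj andbT; apply: contra jr => /eqP jn; apply/eqP/val_inj.
rewrite /= mulr0; have := ele _ _ nj.
by rewrite -[(n %% d).+1%:R]natr1 mulrDr mulr1; lra.
Qed.

Lemma gd_iterate_bound (n : nat) (j : 'I_d) : 0 < eta -> eta <= (5 * s)^-1 ->
  eta * (n %/ d)%:R <= (5 * s)^-1 -> 0 <= gd_iterate n j <= 2 * (5 * s)^-1.
Proof.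
move=> eta0 eta_s hq; rewrite /gd_iterate mulr_ge0 ?ler0n ?(ltW eta0) //= natrD mulrDr.
have : eta * (j < n %% d)%:R <= eta by rewrite ler_piMr ?(ltW eta0) // lern1 leq_b1.
lra.
Qed.

Lemma eta_mul_divn_le (T n : nat) : 0 < eta -> 5 * eta * T%:R <= s -> (n < T)%N ->
  eta * (n %/ d)%:R <= (5 * s)^-1.
Proof.
move=> eta0 eta_T nT.
have s0 : 0 < s by rewrite sqrtr_gt0 ltr0n.
have qT : (n %/ d)%:R * d%:R <= T%:R :> R.
  by rewrite -natrM ler_nat (leq_trans (leq_divM n d)) // ltnW.
rewrite -[d%:R](sqr_sqrtr (ler0n _ _)) expr2 mulrA in qT.
rewrite -[(5 * s)^-1]mul1r ler_pdivlMr ?mulr_gt0 //.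
nra.
Qed.

Section Run.
Variables (T : nat) (w g : nat -> vec R d).
Hypotheses (eta_gt0 : 0 < eta) (eta_s : eta <= (5 * s)^-1) (eta_T : 5 * eta * T%:R <= s).
Hypothesis w1 : w 1%N = (fun _ => 0).
Hypothesis gd_step : forall t : nat, (1 <= t < T)%N ->
  is_subgrad (@fhard R d eta) (w t) (g t) /\ w t.+1 = (fun i => w t i - eta * g t i).

Lemma gd_trajectory (n : nat) : (n < T)%N -> w n.+1 = gd_iterate n.
Proof.
elim: n => [|n IH] nT.
  by rewrite w1; apply: funext => j; rewrite /gd_iterate div0n mod0n mulr0.
have [sub ->] := gd_step (t := n.+1) nT; rewrite IH ?(ltnW nT) // in sub *.
have e0 : 0 < e by rewrite divr_gt0 ?mulr_gt0 ?ltr0n.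
have dom := gd_iterate_dominant eta_gt0 eta_s (eta_mul_divn_le eta_gt0 eta_T (ltnW nT)).
by rewrite gd_iterateS (subgrad_fhard_dominant e0 dom sub).
Qed.

Lemma gd_coord_bound (t : nat) (j : 'I_d) : (1 <= t <= T)%N ->
  0 <= w t j <= 2 * (5 * s)^-1.
Proof.
case: t => [//|n] /andP [_ nT]; rewrite gd_trajectory //.
exact: gd_iterate_bound eta_gt0 eta_s (eta_mul_divn_le eta_gt0 eta_T nT).
Qed.

Lemma gd_norm_le (t : nat) : (1 <= t <= T)%N -> norm2 (w t) <= 2 / 5.
Proof.
move=> tT; have s0 : 0 < s by rewrite sqrtr_gt0 ltr0n.
have c0 : 0 <= 2 * (5 * s)^-1 by rewrite mulr_ge0 // invr_ge0 mulr_ge0 // ltW.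
have wt_bound j : `|w t j| <= 2 * (5 * s)^-1.
  by have /andP [wj0 wj] := gd_coord_bound j tT; rewrite ger0_norm.
apply: le_trans (norm2_le c0 wt_bound) _.
by have -> : s * (2 * (5 * s)^-1) = 2 / 5 by field; rewrite gt_eqF.
Qed.

Lemma gd_suffix_avg_le (m : nat) (j : 'I_d) : (1 <= m <= T)%N ->
  suffix_avg w T m j <= 2 * (5 * s)^-1.
Proof.
move=> /andP [m1 mT]; apply: suffix_avg_le => // i /andP [i1 im].
have T1 : (1 <= T)%N := leq_trans m1 mT.
have iT : (1 <= T - i + 1 <= T)%N by rewrite addn1 ltn_subrL i1 T1.
by case/andP: (gd_coord_bound j iT).
Qed.

End Run.
End GradientDescentPath.

Lemma sqrtr_max_sqr1 (R : realType) (x : R) :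
  0 <= x -> Num.sqrt (Num.max (x ^+ 2) 1) = Num.max x 1.
Proof.
move=> x0; have [x1|x1] := leP x 1.
  by rewrite !max_r ?sqrtr1 // expr_le1.
rewrite !max_l ?sqrtr_sqr ?ger0_norm // ?(ltW x1) //.
by rewrite expr2 -[1]mulr1 ler_pM // ltW.
Qed.

Lemma eta_le_inv_max (R : realType) (T : nat) (eta : R) : (1 <= T)%N -> 0 < eta ->
  eta <= (5 * Num.sqrt T%:R)^-1 -> eta <= (5 * Num.max (5 * eta * T%:R) 1)^-1.
Proof.
move=> T1 eta0 eta_T.
have sT1 : 1 <= Num.sqrt T%:R :> R by rewrite -[X in X <= _]sqrtr1 ler_sqrt ?ler1n ?ler0n.
have sT2 : Num.sqrt T%:R ^+ 2 = T%:R :> R by rewrite sqr_sqrtr // ler0n.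
have {}eta_T : eta * (5 * Num.sqrt T%:R) <= 1.
  by rewrite -ler_pdivlMr ?mul1r // mulr_gt0 // (lt_le_trans ltr01).
have M0 : 0 < 5 * Num.max (5 * eta * T%:R) 1 by rewrite mulr_gt0 // lt_max ltr01 orbT.
rewrite -[(5 * Num.max _ _)^-1]mul1r ler_pdivlMr //.
case: (leP (5 * eta * T%:R) 1) => h; nra.
Qed.

Theorem mainTheorem13 (R : realType) (T d : nat) (eta : R)
  (w g : nat -> vec R d) :
  (1 <= T)%N ->
  0 < eta ->
  eta <= (5 * Num.sqrt T%:R)^-1 ->
  d%:R = Num.max (25 * eta ^+ 2 * T%:R ^+ 2) 1 ->
  (0 < d)%N ->
  w 1%N = (fun _ => 0) ->
  (forall t : nat, (1 <= t < T)%N ->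
     is_subgrad (@fhard R d eta) (w t) (g t) /\
     w t.+1 = (fun i => w t i - eta * g t i)) ->
  (forall t : nat, (1 <= t <= T)%N -> norm2 (w t) <= 1) /\
  (forall m : nat, (1 <= m <= T)%N ->
     @fhard R d eta (suffix_avg w T m) - inf (range (@fhard R d eta))
       >= Num.min (4%:R^-1) ((20 * eta * T%:R)^-1)).
Proof.
move=> T1 eta0 eta_sqrtT hd d0 w1 step.
have s_def : Num.sqrt d%:R = Num.max (5 * eta * T%:R) 1 :> R.
  rewrite hd.
  have -> : 25 * eta ^+ 2 * T%:R ^+ 2 = (5 * eta * T%:R) ^+ 2 by ring.
  by rewrite sqrtr_max_sqr1 // mulr_ge0 ?ler0n // mulr_ge0 // ltW.
have eta_s : eta <= (5 * Num.sqrt d%:R)^-1 by rewrite s_def eta_le_inv_max.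
have eta_T : 5 * eta * T%:R <= Num.sqrt d%:R by rewrite s_def le_max lexx.
split=> [t tT | m mT].
  by apply: le_trans (gd_norm_le d0 eta0 eta_s eta_T w1 step tT) _; lra.
rewrite inf_range_fhard ?subr0; last exact: ltW.
have avg_bound := gd_suffix_avg_le d0 eta0 eta_s eta_T w1 step (Ordinal d0) mT.
apply: (le_trans _ (fhard_ge_half_inv_sqrt (ltW eta0) eta_s avg_bound)).
rewrite s_def ge_min; case: (leP (5 * eta * T%:R) 1) => h; apply/orP; [left | right].
  by rewrite mulr1 lef_pV2 ?posrE //; lra.
rewrite lef_pV2 ?posrE; lra.
Qed.
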